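(* Let $(L,\delta,\alpha,\beta)$, $(V,\mu,\alpha_V,\beta_V)$ and $(M,d',\alpha_M,\beta_M)$ be BiHom-Lie algebras and let $$E:\ 0\longrightarrow (V,\mu,\alpha_V,\beta_V)\xrightarrow{\ i\ }(M,d',\alpha_M,\beta_M)\xrightarrow{\ \pi\ }(L,\delta,\alpha,\beta)\longrightarrow 0$$ be a split extension of $L$ by $V$. Then there exist bilinear maps $\lambda_l\colon L\times V\to V$, $\lambda_r\colon V\times L\to V$, $\theta\colon L\times L\to V$ such that, with $d\colon (L\oplus V)^2\to L\oplus V$ defined by $$d(x+v,y+w)=\delta(x,y)+\theta(x,y)+\lambda_l(x,w)+\lambda_r(v,y)+\mu(v,w)\qquad(x,y\in L,\ v,w\in V),$$ the pair $(\lambda_l,\lambda_r)$ is a representation of $L$ on $(V,\alpha_V,\beta_V)$, $\theta$ is a $2$-cocycle of $L$ on $V$ with respect to it, and $$E_0:\ 0\longrightarrow (V,\mu,\alpha_V,\beta_V)\xrightarrow{\ i_0\ }(L\oplus V,d,\alpha+\alpha_V,\beta+\beta_V)\xrightarrow{\ \pi_0\ }(L,\delta,\alpha,\beta)\longrightarrow 0,$$ where $i_0(v)=v$ and $\pi_0(x+v)=x$, is a split extension of $L$ by $V$ which is equivalent to $E$.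
   Context: All vector spaces are over a field $\mathbb{K}$. A BiHom-Lie algebra $(L,[\cdot,\cdot],\alpha,\beta)$ is a vector space $L$ with a bilinear map $[\cdot,\cdot]\colon L\times L\to L$ and linear maps $\alpha,\beta\colon L\to L$ such that $\alpha\circ\beta=\beta\circ\alpha$, $[\beta(x),\alpha(y)]=-[\beta(y),\alpha(x)]$, and $[\beta^2(x),[\beta(y),\alpha(z)]]+[\beta^2(y),[\beta(z),\alpha(x)]]+[\beta^2(z),[\beta(x),\alpha(y)]]=0$ for all $x,y,z$ ($\alpha,\beta$ need not be multiplicative). A morphism $f\colon(L,[\cdot,\cdot],\alpha,\beta)\to(L',[\cdot,\cdot]',\alpha',\beta')$ is a linear map with $f\circ\alpha=\alpha'\circ f$, $f\circ\beta=\beta'\circ f$, $f([x,y])=[f(x),f(y)]'$. A BiHom-subalgebra of $(M,d,\alpha_M,\beta_M)$ is a subspace $H$ with $\alpha_M(H)\subset H$, $\beta_M(H)\subset H$, $d(H,H)\subset H$. On $L\oplus V$, $\alpha+\alpha_V$ denotes $x+v\mapsto\alpha(x)+\alpha_V(v)$, similarly $\beta+\beta_V$. An extension of $(L,\delta,\alpha,\beta)$ by $(V,\mu,\alpha_V,\beta_V)$ is a sequence $0\to V\xrightarrow{i}M\xrightarrow{\pi}L\to0$ of BiHom-Lie algebras and morphisms with $i$ injective, $\pi$ surjective, $\mathrm{Im}(i)=\ker(\pi)$. It is split if there is a BiHom-subalgebra $S\subset M$ with $M=S\oplus\ker\pi$. Two extensions $0\to V_1\xrightarrow{i_1}M_1\xrightarrow{\pi_1}L_1\to0$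 and $0\to V_2\xrightarrow{i_2}M_2\xrightarrow{\pi_2}L_2\to0$ are equivalent if there are linear maps $\varphi\colon V_1\to V_2$, $s\colon L_1\to L_2$ and an isomorphism of BiHom-Lie algebras $\Phi\colon M_1\to M_2$ with $\Phi\circ i_1=i_2\circ\varphi$ and $\pi_2\circ\Phi=s\circ\pi_1$. A representation of $(L,\delta,\alpha,\beta)$ on $(V,\alpha_V,\beta_V)$ (with $\alpha_V\beta_V=\beta_V\alpha_V$) is a pair of bilinear maps $\lambda_l\colon L\times V\to V$, $\lambda_r\colon V\times L\to V$ with, for all $x,y\in L$, $v\in V$: $\lambda_r(\beta_V(v),\alpha(y))=-\lambda_l(\beta(y),\alpha_V(v))$ and $\lambda_l(\beta^2(x),\lambda_l(\beta(y),\alpha_V(v)))+\lambda_l(\beta^2(y),\lambda_r(\beta_V(v),\alpha(x)))+\lambda_r(\beta_V^2(v),\delta(\beta(x),\alpha(y)))=0$. A $2$-cocycle of $L$ on $V$ with respect to it is a bilinear $\theta\colon L\times L\to V$ with $\theta(\beta(x),\alpha(y))=-\theta(\beta(y),\alpha(x))$ and $\theta(\beta^2(x),\delta(\beta(y),\alpha(z)))-\theta(\beta^2(y),\delta(\beta(x),\alpha(z)))+\theta(\beta^2(z),\delta(\beta(x),\alpha(y)))+\lambda_l(\beta^2(x),\theta(\beta(y),\alpha(z)))-\lambda_l(\beta^2(y),\theta(\beta(x),\alpha(z)))+\lambda_l(\beta^2(z),\theta(\beta(x),\alpha(y)))=0$ for all $x,y,z\in L$. *)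

From HB Require Import structures.
From mathcomp Require Import all_boot all_order all_algebra.
Set Implicit Arguments. Unset Strict Implicit. Unset Printing Implicit Defensive.
Import GRing.Theory.
Local Open Scope ring_scope.

Section BiHom.
Variable K : fieldType.

Definition bilinear_map (U W Z : lmodType K) (f : U -> W -> Z) : Prop :=
  (forall x, linear (f x)) /\ (forall y, linear (fun x => f x y)).

(* BiHom-Lie algebra (L,[.,.],alpha,beta); alpha, beta linear, not necessarily multiplicative *)
Definition BiHomLie (L : lmodType K) (br : L -> L -> L) (al be : L -> L) : Prop :=
  ((bilinear_map br) /\ (linear al) /\ (linear be) /\ ((forall x, al (be x) = be (al x))) /\ ((forall x y, br (be x) (al y) = - br (be y) (al x))) /\ ((forall x y z, br (be (be x)) (br (be y) (al z))
                   + br (be (be y)) (br (be z) (al x))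
                   + br (be (be z)) (br (be x) (al y)) = 0))).

Definition BiHomMorph (L L' : lmodType K) (br : L -> L -> L) (al be : L -> L)
  (br' : L' -> L' -> L') (al' be' : L' -> L') (f : L -> L') : Prop :=
  ((linear f) /\ ((forall x, f (al x) = al' (f x))) /\ ((forall x, f (be x) = be' (f x))) /\ ((forall x y, f (br x y) = br' (f x) (f y)))).

Definition BiHomSub (M : lmodType K) (d : M -> M -> M) (aM bM : M -> M)
  (H : M -> Prop) : Prop :=
  ((H 0) /\ ((forall a u v, H u -> H v -> H (a *: u + v))) /\ ((forall x, H x -> H (aM x))) /\ ((forall x, H x -> H (bM x))) /\ ((forall x y, H x -> H y -> H (d x y)))).

Definition BiHomExtension (V M L : lmodType K)
  (mu : V -> V -> V) (aV bV : V -> V)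
  (dM : M -> M -> M) (aM bM : M -> M)
  (dL : L -> L -> L) (aL bL : L -> L)
  (i : V -> M) (pi : M -> L) : Prop :=
  ((BiHomLie mu aV bV) /\ (BiHomLie dM aM bM) /\ (BiHomLie dL aL bL) /\ (BiHomMorph mu aV bV dM aM bM i) /\ (BiHomMorph dM aM bM dL aL bL pi) /\ (injective i) /\ ((forall y, exists x, pi x = y)) /\ ((forall m, (exists v, i v = m) <-> pi m = 0))).

Definition BiHomSplitExtension (V M L : lmodType K)
  (mu : V -> V -> V) (aV bV : V -> V)
  (dM : M -> M -> M) (aM bM : M -> M)
  (dL : L -> L -> L) (aL bL : L -> L)
  (i : V -> M) (pi : M -> L) : Prop :=
  BiHomExtension mu aV bV dM aM bM dL aL bL i pi /\
  exists S : M -> Prop, BiHomSub dM aM bM S /\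
     (forall m, exists s k, S s /\ pi k = 0 /\ m = s + k) /\
     (forall m, S m -> pi m = 0 -> m = 0).

Definition BiHomExtEquiv (V1 M1 L1 V2 M2 L2 : lmodType K)
  (d1 : M1 -> M1 -> M1) (a1 b1 : M1 -> M1) (i1 : V1 -> M1) (pi1 : M1 -> L1)
  (d2 : M2 -> M2 -> M2) (a2 b2 : M2 -> M2) (i2 : V2 -> M2) (pi2 : M2 -> L2) : Prop :=
  exists (phi : V1 -> V2) (s : L1 -> L2) (Phi : M1 -> M2),
    ((linear phi) /\ (linear s) /\ (BiHomMorph d1 a1 b1 d2 a2 b2 Phi) /\ (bijective Phi) /\ ((forall v, Phi (i1 v) = i2 (phi v))) /\ ((forall m, pi2 (Phi m) = s (pi1 m)))).

Definition BiHomRep (L V : lmodType K) (delta : L -> L -> L) (al be : L -> L)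
  (aV bV : V -> V) (ll : L -> V -> V) (lr : V -> L -> V) : Prop :=
  (((forall v, aV (bV v) = bV (aV v))) /\ (bilinear_map ll) /\ (bilinear_map lr) /\ ((forall y v, lr (bV v) (al y) = - ll (be y) (aV v))) /\ ((forall x y v, ll (be (be x)) (ll (be y) (aV v))
                   + ll (be (be y)) (lr (bV v) (al x))
                   + lr (bV (bV v)) (delta (be x) (al y)) = 0))).

Definition BiHomCocycle (L V : lmodType K) (delta : L -> L -> L) (al be : L -> L)
  (ll : L -> V -> V) (theta : L -> L -> V) : Prop :=
  ((bilinear_map theta) /\ ((forall x y, theta (be x) (al y) = - theta (be y) (al x))) /\ ((forall x y z,
        theta (be (be x)) (delta (be y) (al z)) - theta (be (be y)) (delta (be x) (al z))
        + theta (be (be z)) (delta (be x) (al y))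
        + ll (be (be x)) (theta (be y) (al z)) - ll (be (be y)) (theta (be x) (al z))
        + ll (be (be z)) (theta (be x) (al y)) = 0))).

Definition sumBracket (L V : lmodType K) (delta : L -> L -> L) (mu : V -> V -> V)
  (ll : L -> V -> V) (lr : V -> L -> V) (theta : L -> L -> V)
  (p q : (L * V)%type) : (L * V)%type :=
  (delta p.1 q.1, theta p.1 q.1 + ll p.1 q.2 + lr p.2 q.1 + mu p.2 q.2).

Definition sumMap (L V : lmodType K) (f : L -> L) (g : V -> V) (p : (L * V)%type)
  : (L * V)%type := (f p.1, g p.2).

Definition inj0 (L V : lmodType K) (v : V) : (L * V)%type := (0, v).
Definition proj0 (L V : lmodType K) (p : (L * V)%type) : L := p.1.

End BiHom.

(* Since M = S (+) ker pi for a BiHom-subalgebra S, the inverse s of pi on S is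
a morphism of BiHom-Lie algebras L -> M, and (x, v) |-> s x + i v is a linear
bijection L (+) V -> M. It carries the bracket d built from
ll x v = d'(s x, i v), lr v y = d'(i v, s y) (read back in V through i) and
theta = 0 onto d', because d'(s x, s y) = s (delta x y). Hence d is a BiHom-Lie
bracket, E_0 is equivalent to E, and the representation axioms are those of d'
evaluated on s x, s y and i v. *)
From HB Require Import structures.
From mathcomp Require Import all_boot all_order all_algebra.
From Stdlib Require Import ClassicalEpsilon.
Set Implicit Arguments. Unset Strict Implicit.
Local Open Scope ring_scope.
Import GRing.Theory.

Section LinearMaps.
Variable K : fieldType.
Implicit Types U W : lmodType K.

Lemma linD U W (f : U -> W) : linear f -> forall x y, f (x + y) = f x + f y.
Proof. by move=> f_lin x y; have := f_lin 1 x y; rewrite !scale1r. Qed.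

Lemma lin0 U W (f : U -> W) : linear f -> f 0 = 0.
Proof.
move=> f_lin; have := linD f_lin 0 0; rewrite addr0.
by move/(congr1 (fun w => w - f 0)); rewrite subrr addrK => <-.
Qed.

Lemma linZ U W (f : U -> W) : linear f -> forall a x, f (a *: x) = a *: f x.
Proof. by move=> f_lin a x; have := f_lin a x 0; rewrite (lin0 f_lin) !addr0. Qed.

Lemma linN U W (f : U -> W) : linear f -> forall x, f (- x) = - f x.
Proof. by move=> f_lin x; rewrite -scaleN1r linZ // scaleN1r. Qed.

Section Bilinear.
Variables (U W Z : lmodType K) (f : U -> W -> Z).
Hypothesis f_bilin : bilinear_map f.

Lemma bilinDl x y z : f (x + y) z = f x z + f y z.
Proof. exact: (linD (f_bilin.2 z)). Qed.
Lemma bilinDr x y z : f x (y + z) = f x y + f x z.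
Proof. exact: (linD (f_bilin.1 x)). Qed.
Lemma bilinZl a x z : f (a *: x) z = a *: f x z.
Proof. exact: (linZ (f_bilin.2 z)). Qed.
Lemma bilinZr a x z : f x (a *: z) = a *: f x z.
Proof. exact: (linZ (f_bilin.1 x)). Qed.
Lemma bilin0l z : f 0 z = 0.
Proof. exact: (lin0 (f_bilin.2 z)). Qed.
Lemma bilin0r x : f x 0 = 0.
Proof. exact: (lin0 (f_bilin.1 x)). Qed.

End Bilinear.
End LinearMaps.

Section Pullback.
Variables (K : fieldType) (A B : lmodType K).
Variables (brA : A -> A -> A) (aA bA : A -> A) (brB : B -> B -> B) (aB bB : B -> B).

Lemma BiHomLie_pullback (f : A -> B) :
  BiHomMorph brA aA bA brB aB bB f -> injective f ->
  BiHomLie brB aB bB -> BiHomLie brA aA bA.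
Proof.
move=> [f_lin [f_a [f_b f_br]]] f_inj [brB_bilin [aB_lin [bB_lin [ab_comm [skew jacobi]]]]].
split.
  split=> [x a y z | z a x y]; apply: f_inj.
  - by rewrite f_lin !f_br f_lin (bilinDr brB_bilin) (bilinZr brB_bilin).
  - by rewrite f_lin !f_br f_lin (bilinDl brB_bilin) (bilinZl brB_bilin).
split; first by move=> a x y; apply: f_inj; rewrite f_lin !f_a f_lin aB_lin.
split; first by move=> a x y; apply: f_inj; rewrite f_lin !f_b f_lin bB_lin.
split; first by move=> x; apply: f_inj; rewrite !(f_a, f_b) ab_comm.
split; first by move=> x y; apply: f_inj; rewrite (linN f_lin) !(f_br, f_a, f_b) skew.
by move=> x y z; apply: f_inj; rewrite !(linD f_lin) !(f_br, f_a, f_b) (lin0 f_lin).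
Qed.

End Pullback.

Lemma zero_cocycle (K : fieldType) (L V : lmodType K) (delta : L -> L -> L) (al be : L -> L)
    (ll : L -> V -> V) :
  bilinear_map ll -> BiHomCocycle delta al be ll (fun _ _ => 0).
Proof.
move=> ll_bilin; split; first by split=> x a u v; rewrite scaler0 addr0.
split; first by move=> x y; rewrite oppr0.
by move=> x y z; rewrite !(bilin0r ll_bilin) !(subr0, addr0).
Qed.

Section TrivialSplitExtension.
Variables (K : fieldType) (L V : lmodType K).
Variables (delta : L -> L -> L) (al be : L -> L) (mu : V -> V -> V) (aV bV : V -> V).
Variables (ll : L -> V -> V) (lr : V -> L -> V).
Hypotheses (L_lie : BiHomLie delta al be) (V_lie : BiHomLie mu aV bV)
  (ll_bilin : bilinear_map ll) (lr_bilin : bilinear_map lr).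

Local Notation sum_br := (sumBracket delta mu ll lr (fun _ _ => 0)).

Hypothesis sum_lie : BiHomLie sum_br (sumMap al aV) (sumMap be bV).

Lemma inj0_morph : BiHomMorph mu aV bV sum_br (sumMap al aV) (sumMap be bV) (@inj0 K L V).
Proof.
rewrite /inj0 /sumMap /sumBracket; split.
  by move=> a v w; rewrite -[RHS]/(a *: 0 + 0, a *: v + w) scaler0 addr0.
split; first by move=> v /=; rewrite (lin0 L_lie.2.1).
split; first by move=> v /=; rewrite (lin0 L_lie.2.2.1).
move=> v w /=.
by rewrite (bilin0l L_lie.1) (bilin0l ll_bilin) (bilin0r lr_bilin) !add0r.
Qed.

Lemma proj0_morph : BiHomMorph sum_br (sumMap al aV) (sumMap be bV) delta al be (@proj0 K L V).
Proof. by []. Qed.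

Lemma sum_extension : BiHomExtension mu aV bV sum_br (sumMap al aV) (sumMap be bV)
  delta al be (@inj0 K L V) (@proj0 K L V).
Proof.
split; first exact: V_lie.
split; first exact: sum_lie.
split; first exact: L_lie.
split; first exact: inj0_morph.
split; first exact: proj0_morph.
split; first by move=> v w [].
split; first by move=> x; exists (x, 0).
by move=> [x v]; split=> [[w [<-]] | /= ->]; last exists v.
Qed.

Lemma sum_split_extension : BiHomSplitExtension mu aV bV sum_br (sumMap al aV) (sumMap be bV)
  delta al be (@inj0 K L V) (@proj0 K L V).
Proof.
split; first exact: sum_extension.
exists (fun p => p.2 = 0); split.
  split; first by [].
  split; first by move=> a [x u] [y w] /= -> ->; rewrite scaler0 addr0.
  split; first by move=> [x u] /= ->; rewrite (lin0 V_lie.2.1).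
  split; first by move=> [x u] /= ->; rewrite (lin0 V_lie.2.2.1).
  move=> [x u] [y w] /= -> ->.
  by rewrite (bilin0r ll_bilin) (bilin0l lr_bilin) (bilin0l V_lie.1) !addr0.
split; last by move=> [x u] /= -> ->.
move=> [x u]; exists (x, 0), (0, u).
by rewrite -[(x, 0) + _]/(x + 0, 0 + u) addr0 add0r.
Qed.

End TrivialSplitExtension.

Section SplittingSection.
Variables (K : fieldType) (L M : lmodType K).
Variables (d' : M -> M -> M) (aM bM : M -> M) (delta : L -> L -> L) (al be : L -> L).
Variables (pi : M -> L) (S : M -> Prop).
Hypotheses (pi_morph : BiHomMorph d' aM bM delta al be pi)
  (pi_surj : forall y, exists m, pi m = y) (S_sub : BiHomSub d' aM bM S)
  (S_compl : forall m, exists s k, S s /\ pi k = 0 /\ m = s + k)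
  (S_ker : forall m, S m -> pi m = 0 -> m = 0).

Lemma pi_inj_on_S m1 m2 : S m1 -> S m2 -> pi m1 = pi m2 -> m1 = m2.
Proof.
case: pi_morph => pi_lin _; case: S_sub => _ [S_lin _] S1 S2 e.
apply/eqP; rewrite -subr_eq0 -scaleN1r addrC; apply/eqP/S_ker; first exact: S_lin.
by rewrite (linD pi_lin) (linZ pi_lin) e scaleN1r addNr.
Qed.

Definition split_section (x : L) : M :=
  epsilon (inhabits 0) (fun m => S m /\ pi m = x).

Lemma split_sectionP x : S (split_section x) /\ pi (split_section x) = x.
Proof.
apply: (epsilon_spec _ (fun m => S m /\ pi m = x)).
have [m <-] := pi_surj x.
have [s [k [Ss [pi_k ->]]]] := S_compl m.
by exists s; rewrite (linD pi_morph.1) pi_k addr0.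
Qed.

Lemma split_section_unique x m : S m -> pi m = x -> split_section x = m.
Proof.
move=> Sm pi_m; have [S_sec pi_sec] := split_sectionP x.
by apply: pi_inj_on_S; rewrite ?pi_sec.
Qed.

Lemma split_section_morph : BiHomMorph delta al be d' aM bM split_section.
Proof.
case: pi_morph => pi_lin [pi_a [pi_b pi_br]].
case: S_sub => _ [S_lin [S_a [S_b S_br]]].
have S_sec x := (split_sectionP x).1.
have pi_sec x := (split_sectionP x).2.
split; first by move=> a x y; apply: split_section_unique;
  [exact: S_lin | rewrite pi_lin !pi_sec].
split; first by move=> x; apply: split_section_unique; [exact: S_a | rewrite pi_a pi_sec].
split; first by move=> x; apply: split_section_unique; [exact: S_b | rewrite pi_b pi_sec].
by move=> x y; apply: split_section_unique; [exact: S_br | rewrite pi_br !pi_sec].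
Qed.

End SplittingSection.

Section SectionedExtension.
Variables (K : fieldType) (L V M : lmodType K).
Variables (delta : L -> L -> L) (al be : L -> L) (mu : V -> V -> V) (aV bV : V -> V).
Variables (d' : M -> M -> M) (aM bM : M -> M) (i : V -> M) (pi : M -> L) (s : L -> M).
Hypotheses (delta_bilin : bilinear_map delta) (aV_bV : forall v, aV (bV v) = bV (aV v))
  (M_lie : BiHomLie d' aM bM)
  (i_morph : BiHomMorph mu aV bV d' aM bM i) (i_inj : injective i)
  (pi_morph : BiHomMorph d' aM bM delta al be pi)
  (ker_pi : forall m, (exists v, i v = m) <-> pi m = 0)
  (s_morph : BiHomMorph delta al be d' aM bM s) (pi_s : forall x, pi (s x) = x).

Let d'_bilin := M_lie.1.
Let aM_lin := M_lie.2.1.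
Let bM_lin := M_lie.2.2.1.
Let d'_skew := M_lie.2.2.2.2.1.
Let d'_jacobi := M_lie.2.2.2.2.2.
Let i_lin := i_morph.1.
Let i_a := i_morph.2.1.
Let i_b := i_morph.2.2.1.
Let i_br := i_morph.2.2.2.
Let pi_lin := pi_morph.1.
Let pi_br := pi_morph.2.2.2.
Let s_lin := s_morph.1.
Let s_a := s_morph.2.1.
Let s_b := s_morph.2.2.1.
Let s_br := s_morph.2.2.2.

Lemma pi_i v : pi (i v) = 0.
Proof. by apply/ker_pi; exists v. Qed.

Definition ker_inv (m : M) : V := epsilon (inhabits 0) (fun v => i v = m).

Lemma ker_invK m : pi m = 0 -> i (ker_inv m) = m.
Proof. by move/ker_pi; apply: epsilon_spec. Qed.

Lemma ker_invE v : ker_inv (i v) = v.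
Proof. by apply: i_inj; rewrite ker_invK ?pi_i. Qed.

Definition act_l (x : L) (v : V) : V := ker_inv (d' (s x) (i v)).
Definition act_r (v : V) (y : L) : V := ker_inv (d' (i v) (s y)).

Lemma i_act_l x v : i (act_l x v) = d' (s x) (i v).
Proof. by rewrite ker_invK // pi_br pi_i (bilin0r delta_bilin). Qed.

Lemma i_act_r v y : i (act_r v y) = d' (i v) (s y).
Proof. by rewrite ker_invK // pi_br pi_i (bilin0l delta_bilin). Qed.

Lemma act_l_bilin : bilinear_map act_l.
Proof.
split=> [x a v w | w a u v]; apply: i_inj; rewrite i_lin !i_act_l.
  by rewrite i_lin (bilinDr d'_bilin) (bilinZr d'_bilin).
by rewrite s_lin (bilinDl d'_bilin) (bilinZl d'_bilin).
Qed.

Lemma act_r_bilin : bilinear_map act_r.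
Proof.
split=> [v a x y | y a u v]; apply: i_inj; rewrite i_lin !i_act_r.
  by rewrite s_lin (bilinDr d'_bilin) (bilinZr d'_bilin).
by rewrite i_lin (bilinDl d'_bilin) (bilinZl d'_bilin).
Qed.

Lemma section_rep : BiHomRep delta al be aV bV act_l act_r.
Proof.
split; first exact: aV_bV.
split; first exact: act_l_bilin.
split; first exact: act_r_bilin.
split=> [y v | x y v]; apply: i_inj.
  by rewrite (linN i_lin) i_act_r i_act_l i_a i_b s_a s_b d'_skew.
rewrite !(linD i_lin) (lin0 i_lin).
rewrite !(i_act_l, i_act_r, i_a, i_b, s_a, s_b, s_br).
exact: d'_jacobi.
Qed.

Local Notation sum_br := (sumBracket delta mu act_l act_r (fun _ _ => 0)).

Definition sum_to_ext (p : L * V) : M := s p.1 + i p.2.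
Definition ext_to_sum (m : M) : L * V := (pi m, ker_inv (m - s (pi m))).

Lemma sum_to_ext_bij : bijective sum_to_ext.
Proof.
exists ext_to_sum => [[x v] | m]; rewrite /sum_to_ext /ext_to_sum /=.
  by rewrite (linD pi_lin) pi_s pi_i addr0 addrC addKr ker_invE.
rewrite ker_invK; first by rewrite addrC subrK.
by rewrite (linD pi_lin) (linN pi_lin) pi_s subrr.
Qed.

Lemma sum_to_ext_morph :
  BiHomMorph sum_br (sumMap al aV) (sumMap be bV) d' aM bM sum_to_ext.
Proof.
rewrite /sum_to_ext; split.
  by move=> a [x u] [y w] /=; rewrite s_lin i_lin scalerDr addrACA.
split; first by move=> [x u] /=; rewrite s_a i_a (linD aM_lin).
split; first by move=> [x u] /=; rewrite s_b i_b (linD bM_lin).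
move=> [x u] [y w] /=.
rewrite s_br !(linD i_lin) (lin0 i_lin) i_act_l i_act_r i_br add0r.
by rewrite !(bilinDl d'_bilin) !(bilinDr d'_bilin) !addrA.
Qed.

Lemma sum_br_lie : BiHomLie sum_br (sumMap al aV) (sumMap be bV).
Proof.
exact: (BiHomLie_pullback sum_to_ext_morph (bij_inj sum_to_ext_bij) M_lie).
Qed.

Lemma sum_ext_equiv :
  BiHomExtEquiv sum_br (sumMap al aV) (sumMap be bV) (@inj0 K L V) (@proj0 K L V)
    d' aM bM i pi.
Proof.
exists id, id, sum_to_ext.
split; first by [].
split; first by [].
split; first exact: sum_to_ext_morph.
split; first exact: sum_to_ext_bij.
split=> [v | [x v]] /=; rewrite /sum_to_ext /=; first by rewrite (lin0 s_lin) add0r.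
by rewrite (linD pi_lin) pi_s pi_i addr0.
Qed.

End SectionedExtension.

Theorem mainTheorem2 (K : fieldType) (L V M : lmodType K)
  (delta : L -> L -> L) (al be : L -> L)
  (mu : V -> V -> V) (aV bV : V -> V)
  (d' : M -> M -> M) (aM bM : M -> M)
  (i : V -> M) (pi : M -> L) :
  BiHomLie delta al be -> BiHomLie mu aV bV -> BiHomLie d' aM bM ->
  BiHomSplitExtension mu aV bV d' aM bM delta al be i pi ->
  exists (ll : L -> V -> V) (lr : V -> L -> V) (theta : L -> L -> V),
    ((bilinear_map ll) /\ (bilinear_map lr) /\ (bilinear_map theta) /\ (BiHomRep delta al be aV bV ll lr) /\ (BiHomCocycle delta al be ll theta) /\ (BiHomSplitExtension mu aV bV
          (sumBracket delta mu ll lr theta) (sumMap al aV) (sumMap be bV)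
          delta al be (@inj0 K L V) (@proj0 K L V)) /\ (BiHomExtEquiv
          (sumBracket delta mu ll lr theta) (sumMap al aV) (sumMap be bV)
          (@inj0 K L V) (@proj0 K L V)
          d' aM bM i pi)).
Proof.
move=> L_lie V_lie M_lie [ext [S [S_sub [S_compl S_ker]]]].
have [_ [_ [_ [i_morph [pi_morph [i_inj [pi_surj ker_pi]]]]]]] := ext.
set s := split_section pi S.
have s_morph : BiHomMorph delta al be d' aM bM s by exact: split_section_morph.
have pi_s x : pi (s x) = x by exact: (split_sectionP pi_morph pi_surj S_compl x).2.
have rep := section_rep L_lie.1 V_lie.2.2.2.1 M_lie i_morph i_inj pi_morph ker_pi s_morph.
have [_ [ll_bilin [lr_bilin _]]] := rep.
have sum_lie := sum_br_lie L_lie.1 M_lie i_morph i_inj pi_morph ker_pi s_morph pi_s.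
exists (act_l d' i s), (act_r d' i s), (fun _ _ => 0).
split; first exact: ll_bilin.
split; first exact: lr_bilin.
split; first exact: (zero_cocycle delta al be ll_bilin).1.
split; first exact: rep.
split; first exact: zero_cocycle.
split; first exact: sum_split_extension.
exact: (sum_ext_equiv L_lie.1 M_lie i_morph i_inj pi_morph ker_pi s_morph pi_s).
Qed.
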